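(* For every positive integer $n$, $M(n,1)\le \frac{1}{n}\left(2^{n+1}-2\right)$.
   Context: A grain pattern of length $n$ is a subset $E\subseteq\{2,\dots,n\}$ containing no two consecutive integers. For such $E$, $\phi_E:\{0,1\}^n\to\{0,1\}^n$ sends $\mathbf{x}$ to $\mathbf{y}$ with $y_j=x_{j-1}$ if $j\in E$ and $y_j=x_j$ otherwise. $\Phi_t(\mathbf{x})=\{\phi_E(\mathbf{x}): E \text{ a grain pattern of length } n,\ |E|\le t\}$. A code $\mathcal{C}\subseteq\{0,1\}^n$ is $t$-grain-correcting if for any two distinct codewords $\mathbf{x}_1,\mathbf{x}_2$ one has $\Phi_t(\mathbf{x}_1)\cap\Phi_t(\mathbf{x}_2)=\emptyset$. $M(n,t)$ is the maximum cardinality of a $t$-grain-correcting code of length $n$. *)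

From mathcomp Require Import all_boot.
Set Implicit Arguments. Unset Strict Implicit. Unset Printing Implicit Defensive.

(* Binary words of length n: x : {ffun 'I_n -> bool}; the paper's coordinate
   x_j (j = 1..n) is x (j-1). *)
Definition word n := {ffun 'I_n -> bool}.

(* Grain pattern: E subset of {2,..,n} (0-based: index 0 excluded),
   containing no two consecutive integers. *)
Definition grain_pattern n (E : {set 'I_n}) : bool :=
  [forall i : 'I_n, (i \in E) ==> (nat_of_ord i != 0)] &&
  [forall i : 'I_n, forall j : 'I_n,
     ((i \in E) && (j \in E)) ==> (nat_of_ord j != (nat_of_ord i).+1)].

(* ord_pred_sat j = j-1 (saturating at 0; only used for j in E, so j >= 1). *)
Definition ord_pred_sat n (j : 'I_n) : 'I_n :=
  Ordinal (leq_ltn_trans (leq_pred (nat_of_ord j)) (ltn_ord j)).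

Definition phi n (E : {set 'I_n}) (x : word n) : word n :=
  [ffun j : 'I_n => if j \in E then x (ord_pred_sat j) else x j].

Definition Phi n (t : nat) (x : word n) : {set word n} :=
  [set y | [exists E : {set 'I_n}, [&& grain_pattern E, #|E| <= t & y == phi E x]]].

Definition grain_correcting n (t : nat) (C : {set word n}) : bool :=
  [forall x1 in C, forall x2 in C,
     (x1 != x2) ==> [disjoint Phi t x1 & Phi t x2]].

Definition M (n t : nat) : nat :=
  \max_(C : {set word n} | grain_correcting t C) #|C|.

From mathcomp Require Import all_boot all_order all_algebra zify.
Set Implicit Arguments. Unset Strict Implicit. Unset Printing Implicit Defensive.
Import Order.TTheory GRing.Theory Num.Theory.

(* A single grain error at position [j] copies bit [j-1] onto bit [j]: it
   changes the word exactly when [j] is a transition ([x_j != x_(j-1)]), and it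
   never increases the number of transitions [tr].  So the ball [Phi 1 x] has at
   least [tr x + 1] elements, each of weight [1 / (tr y + 1) >= 1 / (tr x + 1)],
   and carries total weight at least 1.  The balls around the words of a code
   are disjoint, hence [|C| <= sum_y 1 / (tr y + 1)].  As [2 * 'C(n-1, k)] words
   of length [n] have [k] transitions, this sum is
   [2 * sum_k 'C(n-1, k) / (k+1) = (2^(n+1) - 2) / n]. *)

Definition transition n (x : word n) (i : 'I_n) : bool :=
  (0 < i) && (x i != x (ord_pred_sat i)).

Definition transitions n (x : word n) : nat := \sum_(i < n) transition x i.

Lemma phi_set0 n (x : word n) : phi set0 x = x.
Proof. by apply/ffunP => i; rewrite ffunE in_set0. Qed.

Lemma phi_set1 n (j : 'I_n) x i :
  phi [set j] x i = if i == j then x (ord_pred_sat j) else x i.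
Proof. by rewrite ffunE in_set1; case: eqP => // ->. Qed.

Lemma grain_pattern_set0 n : grain_pattern (set0 : {set 'I_n}).
Proof.
apply/andP; split; apply/forallP => i; rewrite ?in_set0 //.
by apply/forallP => k; rewrite in_set0.
Qed.

Lemma grain_pattern_set1 n (j : 'I_n) : grain_pattern [set j] = (0 < j).
Proof.
apply/andP/idP => [[/forallP/(_ j)] | j0]; first by rewrite in_set1 eqxx lt0n.
split; apply/forallP => i; first by rewrite in_set1; apply/implyP => /eqP ->; rewrite -lt0n.
by apply/forallP => k; rewrite !in_set1; apply/implyP => /andP[/eqP-> /eqP->]; lia.
Qed.

Lemma mem_Phi1 n (x y : word n) :
  y \in Phi 1 x = (y == x) || [exists j : 'I_n, (0 < j) && (y == phi [set j] x)].
Proof.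
rewrite inE; apply/existsP/orP => [[E /and3P[+ +] /eqP->] |
                                   [/eqP-> | /existsP[j /andP[j0 /eqP->]]]].
- move=> gE; rewrite leq_eqVlt ltnS leqn0 => /orP[/cards1P[j E1] | /eqP/cards0_eq ->].
    by right; apply/existsP; exists j; rewrite -grain_pattern_set1 -E1 gE E1 eqxx.
  by left; rewrite phi_set0.
- by exists set0; rewrite grain_pattern_set0 cards0 phi_set0 eqxx.
- by exists [set j]; rewrite grain_pattern_set1 j0 cards1 eqxx.
Qed.

Lemma ord_pred_sat_eq n (i j : 'I_n) :
  0 < j -> (ord_pred_sat i == j) = (val i == j.+1).
Proof. by move=> j0; rewrite -val_eqE /=; apply/eqP/eqP; lia. Qed.

(* Moving the grain at [j] kills the transition at [j] and can only shift it
   to [j+1]; the indicator terms keep track of this. *)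
Lemma transition_phi1 n (x : word n) (j i : 'I_n) : 0 < j ->
  transition (phi [set j] x) i + (i == j) * transition x j <=
  transition x i + (val i == j.+1) * transition x j.
Proof.
move=> j0; rewrite /transition !phi_set1 ord_pred_sat_eq //.
case: (eqVneq i j) => [-> | _].
  by rewrite (ltn_eqF (ltnSn j)) eqxx andbF.
rewrite mul0n addn0; case: (eqVneq (val i) j.+1) => [ij1 | _]; last by rewrite mul0n addn0.
have -> : ord_pred_sat i = j by apply/val_inj; rewrite /= ij1.
rewrite ij1 j0 /= mul1n.
by case: (x i); case: (x j); case: (x (ord_pred_sat j)).
Qed.

Lemma sum_val_eq_mul_le n k c : \sum_(i < n) (val i == k) * c <= c.
Proof.
case: (ltnP k n) => [kn | nk]; last first.
  by rewrite big1 // => i _; rewrite ltn_eqF // (leq_trans (ltn_ord i) nk).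
rewrite (bigD1 (Ordinal kn)) //= eqxx mul1n big1 ?addn0 // => i.
by rewrite -val_eqE /= => /negPf->.
Qed.

Lemma transitions_phi1 n (x : word n) (j : 'I_n) :
  0 < j -> transitions (phi [set j] x) <= transitions x.
Proof.
move=> j0.
have := @leq_sum _ (index_enum 'I_n) xpredT _ _ (fun i _ => transition_phi1 x i j0).
have sum_at_j : \sum_(i < n) (i == j) * transition x j = transition x j.
  by rewrite (bigD1 j) //= eqxx mul1n big1 ?addn0 // => i /negPf->.
rewrite !big_split /= sum_at_j => le_sum.
rewrite /transitions -(leq_add2r (transition x j)) (leq_trans le_sum) //.
by rewrite leq_add2l sum_val_eq_mul_le.
Qed.

Lemma transitions_Phi1 n (x y : word n) :
  y \in Phi 1 x -> transitions y <= transitions x.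
Proof.
rewrite mem_Phi1 => /orP[/eqP-> // | /existsP[j /andP[j0 /eqP->]]].
exact: transitions_phi1.
Qed.

(* Moving the grain at a transition [j] changes the bit [j], so these
   [transitions x] neighbours are distinct from each other and from [x]. *)
Lemma card_Phi1 n (x : word n) : (transitions x).+1 <= #|Phi 1 x|.
Proof.
pose T := [set i | transition x i].
pose f (j : 'I_n) := phi [set j] x.
have card_T : transitions x = #|T|.
  by rewrite /transitions -sum1dep_card [RHS]big_mkcond; apply: eq_bigr => i _; case: ifP.
have f_flips j : j \in T -> f j j != x j.
  by rewrite inE => /andP[_]; rewrite /f phi_set1 eqxx eq_sym.
have f_inj : {in T &, injective f}.
  move=> j k jT kT fjk; apply/eqP; apply: contraT => njk.
  by have := f_flips j jT; rewrite fjk /f phi_set1 (negbTE njk) eqxx.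
have sub_Phi : x |: [set f j | j in T] \subset Phi 1 x.
  apply/subsetP => y; rewrite in_setU1 mem_Phi1 => /orP[-> // | /imsetP[j jT ->]].
  by apply/orP; right; apply/existsP; exists j; move: jT; rewrite inE eqxx andbT => /andP[].
apply: leq_trans (subset_leq_card sub_Phi).
rewrite cardsU1 card_in_imset // -card_T.
case: imsetP => // [[j jT fjx]].
by have := f_flips j jT; rewrite -fjx eqxx.
Qed.

Definition snoc_word m (y : word m.+1) (b : bool) : word m.+2 :=
  [ffun i : 'I_m.+2 => if val i < m.+1 then y (inord i) else b].

Lemma transitions_snoc m (y : word m.+1) b :
  transitions (snoc_word y b) = transitions y + (b != y ord_max).
Proof.
rewrite /transitions big_ord_recr /=; congr (_ + _).
  apply: eq_bigr => i _; rewrite /transition !ffunE /= ltn_ord.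
  have i1_lt : i.-1 < m.+1 by apply: leq_ltn_trans (leq_pred _) (ltn_ord i).
  by rewrite i1_lt; congr (_ && (y _ != y _)); apply/val_inj; rewrite /= inordK.
rewrite /transition !ffunE /= ltnn ltnSn.
by have -> : inord m = ord_max :> 'I_m.+1 by apply/val_inj; rewrite /= inordK.
Qed.

Lemma sum_bin_succ m : \sum_(k < m) 'C(m, k.+1) = 2 ^ m - 1.
Proof.
have := expnDn 1 1 m; rewrite big_ord_recl bin0 /= => ->.
by rewrite !exp1n !muln1 addKn; apply: eq_bigr => i _; rewrite !exp1n !muln1.
Qed.

Local Open Scope ring_scope.

Lemma big_word_snoc (V : nmodType) m (F : word m.+2 -> V) :
  \sum_(z : word m.+2) F z = \sum_(y : word m.+1) \sum_(b : bool) F (snoc_word y b).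
Proof.
rewrite pair_big /= (reindex (fun p : word m.+1 * bool => snoc_word p.1 p.2)) //.
pose init (z : word m.+2) := [ffun k : 'I_m.+1 => z (widen_ord (leqnSn _) k)].
apply: onW_bij; exists (fun z => (init z, z ord_max)).
  move=> [y b]; congr (_, _); last by rewrite ffunE /= ltnn.
  apply/ffunP => k; rewrite !ffunE /= ltn_ord.
  by congr (y _); apply/val_inj; rewrite /= inordK.
move=> z; apply/ffunP => i; rewrite !ffunE /=; case: ifP => [i_lt | i_ge].
  by congr (z _); apply/val_inj; rewrite /= inordK.
by congr (z _); apply/val_inj => /=; move: (ltn_ord i) i_ge; lia.
Qed.

Lemma sum_word_transitions (V : nmodType) m (F : nat -> V) :
  \sum_(y : word m.+1) F (transitions y) = \sum_(k < m.+1) F k *+ ('C(m, k) * 2).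
Proof.
elim: m F => [|m IH] F.
  rewrite big_ord1 bin0 (eq_bigr (fun=> F 0%N)) => [|y _]; last first.
    by rewrite /transitions big_ord1.
  by rewrite sumr_const card_ffun card_bool card_ord.
rewrite big_word_snoc.
transitivity (\sum_(y : word m.+1) (F (transitions y) + F (transitions y).+1)).
  apply: eq_bigr => y _; rewrite big_bool !transitions_snoc.
  by case: (y ord_max); rewrite /= addn0 addn1 // addrC.
rewrite big_split /= IH (IH (fun k => F k.+1)) [RHS]big_ord_recl.
under [in RHS]eq_bigr => i _ do rewrite lift0 binS mulnDl mulrnDr.
rewrite big_split /= addrA; congr (_ + _).
rewrite [LHS]big_ord_recl [in RHS]big_ord_recr /=.
by rewrite (bin_small (ltnSn m)) mul0n mulr0n addr0 !bin0.
Qed.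


Lemma sum_bin_div_succ (R : numFieldType) m :
  m.+1%:R * \sum_(k < m.+1) (k.+1%:R)^-1 *+ 'C(m, k) = (2 ^ m.+1 - 1)%N%:R :> R.
Proof.
rewrite -sum_bin_succ natr_sum mulr_sumr; apply: eq_bigr => k _.
rewrite -[_ *+ 'C(m, k)]mulr_natr mulrCA -natrM mul_bin_diag natrM mulKf //.
by rewrite pnatr_eq0.
Qed.

Definition weight n (y : word n) : rat := ((transitions y).+1%:R)^-1.

Lemma weight_ge0 n (y : word n) : 0 <= weight y.
Proof. by rewrite invr_ge0 ler0n. Qed.

Lemma sum_weight_Phi1 n (x : word n) : 1 <= \sum_(y in Phi 1 x) weight y.
Proof.
apply: le_trans (_ : (transitions x).+1%:R * weight x <= _).
  by rewrite /weight mulfV // pnatr_eq0.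
apply: le_trans (_ : #|Phi 1 x|%:R * weight x <= _).
  by rewrite ler_wpM2r ?weight_ge0 // ler_nat card_Phi1.
rewrite mulr_natl -sumr_const; apply: ler_sum => y yP.
by rewrite lef_pV2 ?posrE ?ltr0n // ler_nat ltnS transitions_Phi1.
Qed.

Lemma grain_correcting1_Phi1_inj n (C : {set word n}) (x1 x2 y : word n) :
  grain_correcting 1 C -> x1 \in C -> x2 \in C ->
  y \in Phi 1 x1 -> y \in Phi 1 x2 -> x1 = x2.
Proof.
move=> /forallP/(_ x1)/implyP gc x1C x2C y1 y2; apply/eqP; apply: contraT => nx12.
have /disjointFr/(_ y1) := implyP (implyP (forallP (gc x1C) x2) x2C) nx12.
by rewrite y2.
Qed.

Lemma card_le_sum_weight n (C : {set word n}) :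
  grain_correcting 1 C -> #|C|%:R <= \sum_(y : word n) weight y.
Proof.
move=> gc; apply: le_trans (_ : \sum_(x in C) \sum_(y in Phi 1 x) weight y <= _).
  by rewrite -sum1_card natr_sum; apply: ler_sum => x _; apply: sum_weight_Phi1.
under eq_bigr => x _ do rewrite big_mkcond /=.
rewrite exchange_big /=; apply: ler_sum => y _.
case: (pickP [pred x | (x \in C) && (y \in Phi 1 x)]) => [x0 /andP[x0C yx0] | none].
  rewrite (bigD1 x0) //= yx0 big1 ?addr0 // => x /andP[xC /negP nx0].
  by case: ifP => // yx; case: nx0; rewrite (grain_correcting1_Phi1_inj gc xC x0C yx yx0).
rewrite big1 ?weight_ge0 // => x xC; case: ifP => // yx.
by have := none x; rewrite /= xC yx.
Qed.

Lemma card_grain_correcting1 m (C : {set word m.+1}) :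
  grain_correcting 1 C -> (m.+1 * #|C| <= 2 ^ m.+2 - 2)%N.
Proof.
move=> /card_le_sum_weight; rewrite (sum_word_transitions m (fun k => (k.+1%:R)^-1)).
under eq_bigr => k _ do rewrite mulrnA.
rewrite sumrMnl => le_C.
have -> : (2 ^ m.+2 - 2 = 2 * (2 ^ m.+1 - 1))%N by rewrite expnS mulnBr muln1.
rewrite -(ler_nat rat) !natrM -sum_bin_div_succ mulrCA ler_pM2l //.
by rewrite mulr_natl.
Qed.

Local Close Scope ring_scope.

Theorem corollary3p3 (n : nat) : 0 < n -> n * M n 1 <= 2 ^ n.+1 - 2.
Proof.
case: n => // m _; rewrite mulnC -leq_divRL //; apply/bigmax_leqP => C gc.
by rewrite leq_divRL // mulnC card_grain_correcting1.
Qed.
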